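(* Let $M$ be a simply laced spherical Coxeter diagram, $B$ a set of mutually orthogonal positive roots, $\beta,\gamma\in B$ and $j$ a node of $M$. Then: (i) there is no node $i$ with $(\alpha_i,\beta)=1$, $(\alpha_i,\gamma)=-1$ and $\mathrm{ht}(\beta)=\mathrm{ht}(\gamma)+1$; (ii) if $(\alpha_j,\beta)=-1$, $(\alpha_j,\gamma)=1$ and $\mathrm{ht}(\gamma)=\mathrm{ht}(\beta)+2$, then there is no node $i$ with $\alpha_i\in B^\perp$ and $i\sim j$.
   Context: $M$ has nodes $1,\dots,n$; for distinct nodes, $i\sim j$ means they are joined by an edge. $\Phi^+$ is the set of positive roots of the root system of type $M$, with fundamental roots $\alpha_i$ and inner product normalized by $(\alpha_i,\alpha_i)=2$, $(\alpha_i,\alpha_j)=-1$ if $i\sim j$, $0$ otherwise. The height of $\beta=\sum_k a_k\alpha_k$ is $\mathrm{ht}(\beta)=\sum_k a_k$. $B^\perp$ is the set of roots orthogonal to every element of $B$. *)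

From HB Require Import structures.
From mathcomp Require Import all_boot all_order all_algebra.
Set Implicit Arguments. Unset Strict Implicit. Unset Printing Implicit Defensive.
Import Order.TTheory GRing.Theory Num.Theory.
Local Open Scope ring_scope.

(* A simply laced Coxeter diagram on nodes 'I_n (= {0,...,n-1}) is a simple
   graph given by a symmetric irreflexive relation [e]; [e i j] means i ~ j. *)
Definition simple_graph (n : nat) (e : rel 'I_n) : Prop :=
  symmetric e /\ irreflexive e.

(* Vectors in the root lattice, written in the basis of fundamental roots. *)
Notation vec n := {ffun 'I_n -> int}.

Definition gram (n : nat) (e : rel 'I_n) (i j : 'I_n) : int :=
  if i == j then 2 else if e i j then -1 else 0.

Definition ip (n : nat) (e : rel 'I_n) (x y : vec n) : int :=
  \sum_(i < n) \sum_(j < n) x i * gram e i j * y j.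

(* Spherical: the Coxeter group is finite, i.e. (Tits) the symmetric bilinear
   form is positive definite. *)
Definition spherical (n : nat) (e : rel 'I_n) : Prop :=
  forall x : vec n, x != 0 -> 0 < ip e x x.

Definition alpha (n : nat) (i : 'I_n) : vec n := [ffun k => ((k == i) : nat)%:Z].

Definition srefl (n : nat) (e : rel 'I_n) (i : 'I_n) (v : vec n) : vec n :=
  [ffun k => v k - ip e v (alpha i) * alpha i k].

Inductive is_root (n : nat) (e : rel 'I_n) : vec n -> Prop :=
| root_alpha (i : 'I_n) : is_root e (alpha i)
| root_refl (i : 'I_n) (v : vec n) : is_root e v -> is_root e (srefl e i v).

Definition pos_root (n : nat) (e : rel 'I_n) (v : vec n) : Prop :=
  is_root e v /\ forall k, 0 <= v k.

Definition ht (n : nat) (v : vec n) : int := \sum_(k < n) v k.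

Definition orth_pos_roots (n : nat) (e : rel 'I_n) (B : vec n -> Prop) : Prop :=
  (forall b, B b -> pos_root e b) /\
  (forall b c, B b -> B c -> b <> c -> ip e b c = 0).

Definition in_perp (n : nat) (e : rel 'I_n) (B : vec n -> Prop) (v : vec n) : Prop :=
  is_root e v /\ forall b, B b -> ip e v b = 0.

From HB Require Import structures.
From mathcomp Require Import all_boot all_order all_algebra.
From mathcomp Require Import zify ring.
Import Order.TTheory GRing.Theory Num.Theory.
Set Implicit Arguments. Unset Strict Implicit. Unset Printing Implicit Defensive.
Local Open Scope ring_scope.

(* A vector v of the root lattice with (v, v) = 2 has all its coordinates of
   one sign: write v = p - q with p, q >= 0 of disjoint supports; then
   (p, q) <= 0 since the off-diagonal Gram entries are <= 0, while the form is
   positive definite and even, so p, q <> 0 would force (v, v) >= 4.  Hence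
   such a v has nonzero height.  But in (i) beta - gamma - alpha_i, and in (ii)
   gamma - beta - alpha_i - alpha_j, would have norm 2 and height 0. *)

Section RootLattice.
Variables (n : nat) (e : rel 'I_n).
Implicit Types (x y z v : vec n) (i j k : 'I_n).

Lemma ip0l y : ip e 0 y = 0.
Proof. by rewrite /ip big1 // => i _; rewrite big1 // => j _; rewrite ffunE !mul0r. Qed.

Lemma ipDl x y z : ip e (x + y) z = ip e x z + ip e y z.
Proof.
rewrite /ip -big_split; apply: eq_bigr => i _; rewrite -big_split.
by apply: eq_bigr => j _; rewrite ffunE !mulrDl.
Qed.

Lemma ipNl x z : ip e (- x) z = - ip e x z.
Proof.
rewrite /ip -sumrN; apply: eq_bigr => i _; rewrite -sumrN.
by apply: eq_bigr => j _; rewrite ffunE !mulNr.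
Qed.

Lemma ipBl x y z : ip e (x - y) z = ip e x z - ip e y z.
Proof. by rewrite ipDl ipNl. Qed.

Lemma ipMzl x c z : ip e (x *~ c) z = ip e x z * c.
Proof.
rewrite /ip mulr_suml; apply: eq_bigr => i _; rewrite mulr_suml.
by apply: eq_bigr => j _; rewrite ffunMzE !mulrzz; ring.
Qed.

Lemma ip_alpha i j : ip e (alpha i) (alpha j) = gram e i j.
Proof.
rewrite /ip (bigD1 i) //= [X in _ + X]big1 ?addr0 => [|k /negbTE ki]; last first.
  by rewrite big1 // => l _; rewrite ffunE ki !mul0r.
rewrite (bigD1 j) //= [X in _ + X]big1 ?addr0 => [|l /negbTE lj].
  by rewrite !ffunE !eqxx mul1r mulr1.
by rewrite !ffunE lj mulr0.
Qed.

Lemma ip_alpha_diag i : ip e (alpha i) (alpha i) = 2.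
Proof. by rewrite ip_alpha /gram eqxx. Qed.

Lemma vec_alpha_expansion x : x = \sum_k alpha k *~ x k.
Proof.
apply/ffunP => k; rewrite sum_ffunE (bigD1 k) //= [X in _ + X]big1 => [|l /negbTE lk].
  by rewrite ffunMzE ffunE eqxx mulrzz mul1r addr0.
by rewrite ffunMzE ffunE eq_sym lk mul0rz.
Qed.

Lemma htB x y : ht (x - y) = ht x - ht y.
Proof. by rewrite /ht -sumrB; apply: eq_bigr => k _; rewrite !ffunE. Qed.

Lemma ht_alpha i : ht (alpha i) = 1.
Proof.
rewrite /ht (bigD1 i) //= [X in _ + X]big1 => [|k /negbTE ki]; last by rewrite ffunE ki.
by rewrite ffunE eqxx addr0.
Qed.

Lemma ip_le0_disjoint x y :
  (forall k, 0 <= x k) -> (forall k, 0 <= y k) -> (forall k, x k * y k = 0) ->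
  ip e x y <= 0.
Proof.
move=> x_ge0 y_ge0 xy0; apply: sumr_le0 => i _; apply: sumr_le0 => j _.
rewrite /gram; have [<-|_] := eqVneq i j; first by rewrite mulrAC xy0 mul0r.
by case: (e i j); rewrite ?mulr0 ?mul0r // mulrN1 mulNr oppr_le0 mulr_ge0.
Qed.

Hypothesis e_sym : symmetric e.

Lemma gram_sym i j : gram e i j = gram e j i.
Proof. by rewrite /gram eq_sym e_sym. Qed.

Lemma ip_sym x y : ip e x y = ip e y x.
Proof.
rewrite /ip exchange_big; apply: eq_bigr => i _; apply: eq_bigr => j _.
by rewrite gram_sym; ring.
Qed.

Lemma ipNr x z : ip e z (- x) = - ip e z x.
Proof. by rewrite ip_sym ipNl ip_sym. Qed.

Lemma ipMzr x c z : ip e z (x *~ c) = ip e z x * c.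
Proof. by rewrite ip_sym ipMzl ip_sym. Qed.

Lemma ip_normD x y : ip e (x + y) (x + y) = ip e x x + ip e y y + 2 * ip e x y.
Proof. rewrite !ipDl ![ip e _ (x + y)]ip_sym !ipDl (ip_sym y x); ring. Qed.

Lemma ip_normB x y : ip e (x - y) (x - y) = ip e x x + ip e y y - 2 * ip e x y.
Proof. by rewrite ip_normD ipNl !ipNr opprK mulrN. Qed.

(* Even on each [alpha k *~ c], and the cross term of a sum comes doubled. *)
Lemma ip_norm_even x : (2 %| ip e x x)%Z.
Proof.
rewrite [x]vec_alpha_expansion; elim/big_ind: _ => [|y z ey ez|k _].
- by rewrite ip0l.
- by rewrite ip_normD !rpredD // dvdz_mulr.
- by rewrite ipMzl ipMzr ip_alpha_diag -mulrA dvdz_mulr.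
Qed.

Lemma is_root_norm v : is_root e v -> ip e v v = 2.
Proof.
elim=> [i|i {}v _ IHv]; first exact: ip_alpha_diag.
have -> : srefl e i v = v - alpha i *~ ip e v (alpha i).
  by apply/ffunP => k; rewrite !ffunE ffunMzE ffunE mulrzz mulrC.
by rewrite ip_normB ipMzl !ipMzr ip_alpha_diag IHv; ring.
Qed.

Hypothesis e_spherical : spherical e.

Lemma ip_norm_ge2 x : x != 0 -> 2 <= ip e x x.
Proof. by move=> /e_spherical x_pos; have := ip_norm_even x; lia. Qed.

Lemma ip_norm2_sign v :
  ip e v v = 2 -> (forall k, 0 <= v k) \/ (forall k, v k <= 0).
Proof.
move=> v2; pose p := [ffun k => if 0 <= v k then v k else 0].
pose q := [ffun k => if 0 <= v k then 0 else - v k].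
have vE k : v k = p k - q k by rewrite !ffunE; case: ifP => _; lia.
have p_ge0 k : 0 <= p k by rewrite ffunE; case: ifP => h; lia.
have q_ge0 k : 0 <= q k by rewrite ffunE; case: ifP => h; lia.
have pq0 k : p k * q k = 0 by rewrite !ffunE; case: ifP => _; lia.
have v_pq : v = p - q by apply/ffunP => k; rewrite vE !ffunE.
have pq_le0 := ip_le0_disjoint p_ge0 q_ge0 pq0.
rewrite v_pq ip_normB in v2.
have [p0|/ip_norm_ge2 pp] := eqVneq p 0.
  by right=> k; rewrite vE p0 [X in X - _]ffunE sub0r oppr_le0.
have [q0|/ip_norm_ge2 qq] := eqVneq q 0; last by lia.
by left=> k; rewrite vE q0 [X in _ - X]ffunE subr0.
Qed.

Lemma ht_norm2_neq0 v : ip e v v = 2 -> ht v != 0.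
Proof.
move=> v2; apply/eqP => ht0; suff v0 : v = 0 by move: v2; rewrite v0 ip0l.
apply/ffunP => k; rewrite ffunE; have [v_ge0|v_le0] := ip_norm2_sign v2.
  exact: (@psumr_eq0P _ _ predT v (fun i _ => v_ge0 i) ht0 k isT).
apply: oppr_inj; rewrite oppr0.
apply: (@psumr_eq0P _ _ predT (fun i => - v i)) => // [i _|]; first by rewrite oppr_ge0.
by rewrite sumrN -/(ht v) ht0 oppr0.
Qed.

Section OrthogonalRoots.
Variables (beta gamma : vec n).
Hypotheses (beta_norm : ip e beta beta = 2) (gamma_norm : ip e gamma gamma = 2).
Hypothesis beta_gamma_orth : ip e beta gamma = 0.

Lemma ht_neq_add1 i :
  ip e (alpha i) beta = 1 -> ip e (alpha i) gamma = -1 -> ht beta != ht gamma + 1.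
Proof.
move=> i_beta i_gamma; apply: contraTneq (ht_norm2_neq0 (v := beta - gamma - alpha i) _).
  by rewrite !htB ht_alpha => ->; rewrite negbK; apply/eqP; ring.
rewrite !ip_normB !ipBl ip_alpha_diag.
rewrite (ip_sym beta (alpha i)) (ip_sym gamma (alpha i)).
by rewrite beta_norm gamma_norm beta_gamma_orth i_beta i_gamma.
Qed.

Hypothesis e_irr : irreflexive e.

Lemma ht_neq_add2 i j :
  ip e (alpha j) beta = -1 -> ip e (alpha j) gamma = 1 ->
  ip e (alpha i) beta = 0 -> ip e (alpha i) gamma = 0 -> e i j ->
  ht gamma != ht beta + 2.
Proof.
move=> j_beta j_gamma i_beta i_gamma eij.
apply: contraTneq (ht_norm2_neq0 (v := gamma - beta - alpha i - alpha j) _).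
  by rewrite !htB !ht_alpha => ->; rewrite negbK; apply/eqP; ring.
have i_j : ip e (alpha i) (alpha j) = -1.
  by rewrite ip_alpha /gram eij; case: eqVneq eij => [->|]; rewrite ?e_irr.
rewrite !ip_normB !ipBl !ip_alpha_diag (ip_sym gamma beta).
rewrite (ip_sym gamma (alpha i)) (ip_sym beta (alpha i)).
rewrite (ip_sym gamma (alpha j)) (ip_sym beta (alpha j)).
by rewrite beta_norm gamma_norm beta_gamma_orth i_beta i_gamma j_beta j_gamma i_j.
Qed.

End OrthogonalRoots.

End RootLattice.

Theorem proposition2p1 (n : nat) (e : rel 'I_n)
  (He : simple_graph e) (Hsph : spherical e)
  (B : vec n -> Prop) (HB : orth_pos_roots e B)
  (beta gamma : vec n) (Hbeta : B beta) (Hgamma : B gamma) (j : 'I_n) :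
  (~ exists i : 'I_n,
       [/\ ip e (alpha i) beta = 1, ip e (alpha i) gamma = -1
         & ht beta = ht gamma + 1]) /\
  (ip e (alpha j) beta = -1 -> ip e (alpha j) gamma = 1 ->
   ht gamma = ht beta + 2 ->
   ~ exists i : 'I_n, in_perp e B (alpha i) /\ e i j).
Proof.
have [e_sym e_irr] := He; have [B_pos B_orth] := HB.
have B_norm b : B b -> ip e b b = 2 by case/B_pos => /(is_root_norm e_sym).
have [beta_norm gamma_norm] := (B_norm _ Hbeta, B_norm _ Hgamma).
split.
  case=> i [i_beta i_gamma]; apply/eqP.
  have beta_gamma : ip e beta gamma = 0.
    by apply: B_orth => // beta_gamma; move: i_gamma; rewrite -beta_gamma i_beta.
  exact: ht_neq_add1 i_beta i_gamma.
move=> j_beta j_gamma ht_gamma [i [[_ i_perp] eij]]; move: ht_gamma; apply/eqP.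
have beta_gamma : ip e beta gamma = 0.
  by apply: B_orth => // beta_gamma; move: j_gamma; rewrite -beta_gamma j_beta.
exact: ht_neq_add2 j_beta j_gamma (i_perp _ Hbeta) (i_perp _ Hgamma) eij.
Qed.
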